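(* Under the standing setting below, suppose $\Omega=\mathcal{T}^{-1}(0)\neq\emptyset$, and let $\{z^k\}$ be any sequence generated by $z^{k+1}\approx\mathcal{P}_k(z^k)$ satisfying criterion (A): $\|z^{k+1}-\mathcal{P}_k(z^k)\|_{\mathcal{M}_k}\le\epsilon_k$ with $\epsilon_k\ge0$ and $\sum_{k=0}^\infty\epsilon_k<\infty$. Then $\{z^k\}$ is bounded, \[\mathrm{dist}_{\mathcal{M}_{k+1}}(z^{k+1},\Omega)\le(1+\nu_k)\,\mathrm{dist}_{\mathcal{M}_k}(z^k,\Omega)+(1+\nu_k)\epsilon_k\quad\forall k\ge0,\] and $\{z^k\}$ converges to a point $z^\infty$ with $0\in\mathcal{T}(z^\infty)$.
   Context: Standing setting: $\mathcal{X}$ is a finite-dimensional real Hilbert space, $\mathcal{T}:\mathcal{X}\rightrightarrows\mathcal{X}$ is maximal monotone. $\{c_k\}$ is a sequence of positive reals bounded away from zero. $\{\mathcal{M}_k\}$ are self-adjoint positive definite linear operators on $\mathcal{X}$ satisfying $(1+\nu_k)\mathcal{M}_k\succeq\mathcal{M}_{k+1}$, $\mathcal{M}_k\succeq\lambda_{\min}\mathcal{I}$ for all $k\ge0$, and $\limsup_{k\to\infty}\lambda_{\max}(\mathcal{M}_k)=\lambda_\infty$, where $\{\nu_k\}$ is a nonnegative summable sequence and $+\infty>\lambda_\infty\ge\lambda_{\min}>0$. $\mathcal{P}_k:=(\mathcal{M}_k+c_k\mathcal{T})^{-1}\mathcal{M}_k$ (single-valued). For a self-adjoint positive definite $\mathcal{M}$,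 $\|x\|_{\mathcal{M}}=\sqrt{\langle x,\mathcal{M}x\rangle}$ and $\mathrm{dist}_{\mathcal{M}}(x,D)=\inf_{x'\in D}\|x-x'\|_{\mathcal{M}}$. *)

(* X = R^n realized as vectors nat -> R whose coordinates >= n vanish. *)
From Stdlib Require Import Reals Lra Lia.
Open Scope R_scope.

Definition vec := nat -> R.
Definition mat := nat -> nat -> R.

Fixpoint rsum (n : nat) (f : nat -> R) : R :=
  match n with O => 0 | S m => rsum m f + f m end.

Definition inX (n : nat) (x : vec) : Prop := forall i, (n <= i)%nat -> x i = 0.
Definition nonzero (n : nat) (x : vec) : Prop := exists i, (i < n)%nat /\ x i <> 0.

Definition zerov : vec := fun _ => 0.
Definition vsub (x y : vec) : vec := fun i => x i - y i.

Definition ip (n : nat) (x y : vec) : R := rsum n (fun i => x i * y i).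
Definition enorm (n : nat) (x : vec) : R := sqrt (ip n x x).

Definition mapply (n : nat) (M : mat) (x : vec) : vec :=
  fun i => if Nat.ltb i n then rsum n (fun j => M i j * x j) else 0.

Definition self_adjoint (n : nat) (M : mat) : Prop :=
  forall i j, (i < n)%nat -> (j < n)%nat -> M i j = M j i.
Definition pos_def (n : nat) (M : mat) : Prop :=
  forall x, inX n x -> nonzero n x -> 0 < ip n x (mapply n M x).

Definition loewner_le (n : nat) (A B : mat) : Prop :=
  forall x, inX n x -> ip n x (mapply n A x) <= ip n x (mapply n B x).
Definition mscale (a : R) (M : mat) : mat := fun i j => a * M i j.
Definition idmat : mat := fun i j => if Nat.eqb i j then 1 else 0.

Definition eigenvalue (n : nat) (M : mat) (l : R) : Prop :=
  exists x, inX n x /\ nonzero n x /\ forall i, (i < n)%nat -> mapply n M x i = l * x i.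
Definition is_lambda_max (n : nat) (M : mat) (l : R) : Prop :=
  eigenvalue n M l /\ forall l', eigenvalue n M l' -> l' <= l.

Definition limsup_eq (u : nat -> R) (L : R) : Prop :=
  forall eps, 0 < eps ->
    (exists N, forall k, (N <= k)%nat -> u k <= L + eps) /\
    (forall N, exists k, (N <= k)%nat /\ L - eps <= u k).

Definition normM (n : nat) (M : mat) (x : vec) : R := sqrt (ip n x (mapply n M x)).

Definition is_distM (n : nat) (M : mat) (x : vec) (D : vec -> Prop) (d : R) : Prop :=
  (forall x', D x' -> d <= normM n M (vsub x x')) /\
  (forall e, 0 < e -> exists x', D x' /\ normM n M (vsub x x') < d + e).

(* operators X ==> X as relations: T x y  means  y \in T(x) *)
Definition graph_in_X (n : nat) (T : vec -> vec -> Prop) : Prop :=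
  forall x y, T x y -> inX n x /\ inX n y.
Definition monotone_op (n : nat) (T : vec -> vec -> Prop) : Prop :=
  forall x y x' y', T x y -> T x' y' -> 0 <= ip n (vsub x x') (vsub y y').
Definition maximal_monotone (n : nat) (T : vec -> vec -> Prop) : Prop :=
  graph_in_X n T /\ monotone_op n T /\
  forall x y, inX n x -> inX n y ->
    (forall x' y', T x' y' -> 0 <= ip n (vsub x x') (vsub y y')) -> T x y.

(* w = P(z) = (M + c T)^{-1} M z, i.e.  M z \in M w + c T(w) *)
Definition is_prox (n : nat) (M : mat) (c : R) (T : vec -> vec -> Prop) (z w : vec) : Prop :=
  exists t, T w t /\ forall i, (i < n)%nat -> mapply n M z i = mapply n M w i + c * t i.

From Stdlib Require Import Reals Lra Lia FunctionalExtensionality ClassicalEpsilon Classical Rtopology.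
From Coquelicot Require Import Coquelicot.
Open Scope R_scope.

(** The resolvent equation [M_k (z_k - w_k) = c_k t_k] with
   [t_k \in T w_k] and monotonicity of [T] make [P_k] firmly nonexpansive
   towards every zero [x] of [T].  Together with the metric growth condition
   this gives the quasi-Fejer inequality
     [|z_(k+1) - x|_(M_(k+1)) <= (1 + nu_k) (|z_k - x|_(M_k) + eps_k)],
   which yields boundedness of the iterates, the distance recursion (by passing
   to the infimum over [x]), and convergence of every distance [|z_k - x|_(M_k)].
   Firm nonexpansiveness then forces the residuals [|z_k - w_k|_(M_k)] to 0,
   so by maximality any cluster point (Bolzano--Weierstrass) is a zero of [T];
   the Fejer distance to that cluster point converges and vanishes along a
   subsequence, hence the whole sequence converges to it. *)

Lemma rsum_ext m f g : (forall i, (i < m)%nat -> f i = g i) -> rsum m f = rsum m g.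
Proof.
  induction m as [|m IH]; intros H; simpl; auto.
  rewrite IH by (intros; apply H; lia). rewrite H by lia. reflexivity.
Qed.

Lemma rsum_plus m f g : rsum m (fun i => f i + g i) = rsum m f + rsum m g.
Proof. induction m as [|m IH]; simpl; [lra | rewrite IH; lra]. Qed.

Lemma rsum_scal m a f : rsum m (fun i => a * f i) = a * rsum m f.
Proof. induction m as [|m IH]; simpl; [lra | rewrite IH; lra]. Qed.

Lemma rsum_nonneg m f : (forall i, (i < m)%nat -> 0 <= f i) -> 0 <= rsum m f.
Proof.
  induction m as [|m IH]; intros H; simpl; [lra|].
  assert (0 <= rsum m f) by (apply IH; intros; apply H; lia).
  assert (0 <= f m) by (apply H; lia). lra.
Qed.

Lemma rsum_term_le m f i :
  (forall j, (j < m)%nat -> 0 <= f j) -> (i < m)%nat -> f i <= rsum m f.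
Proof.
  induction m as [|m IH]; intros H Hi; simpl; [lia|].
  assert (0 <= rsum m f) by (apply rsum_nonneg; intros; apply H; lia).
  destruct (Nat.eq_dec i m) as [->|Hne]; [lra|].
  assert (f i <= rsum m f) by (apply IH; [intros; apply H|]; lia).
  assert (0 <= f m) by (apply H; lia). lra.
Qed.

Lemma rsum_mono m p u : (forall i, 0 <= u i) -> (m <= p)%nat -> rsum m u <= rsum p u.
Proof. intros H Hmp. induction Hmp as [|p _ IH]; simpl; [lra | specialize (H p); lra]. Qed.

Lemma rsum_swap m p f :
  rsum m (fun i => rsum p (fun j => f i j)) = rsum p (fun j => rsum m (fun i => f i j)).
Proof.
  induction m as [|m IH]; simpl.
  - induction p as [|p IHp]; simpl; [reflexivity | rewrite <- IHp; ring].
  - rewrite IH, <- rsum_plus. reflexivity.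
Qed.

Lemma rsum_delta m i x :
  (i < m)%nat -> rsum m (fun j => (if Nat.eqb i j then 1 else 0) * x j) = x i.
Proof.
  induction m as [|m IH]; intros H; simpl; [lia|].
  destruct (Nat.eqb_spec i m) as [->|Hne].
  - rewrite (rsum_ext m _ (fun _ => 0 * 0)), rsum_scal; [ring|].
    intros j Hj. destruct (Nat.eqb_spec m j); [lia | ring].
  - rewrite IH by lia. ring.
Qed.

Definition vlc (a : R) (x : vec) (b : R) (y : vec) : vec := fun i => a * x i + b * y i.
Definition Bf (n : nat) (M : mat) (x y : vec) : R := ip n x (mapply n M y).
Definition Qf (n : nat) (M : mat) (x : vec) : R := Bf n M x x.

Lemma inX_lc n a x b y : inX n x -> inX n y -> inX n (vlc a x b y).
Proof. unfold inX, vlc; intros Hx Hy i Hi. rewrite Hx, Hy by exact Hi. ring. Qed.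

Lemma vsub_lc x y : vsub x y = vlc 1 x (-1) y.
Proof. apply functional_extensionality; intros i; unfold vsub, vlc; ring. Qed.

Lemma inX_sub n x y : inX n x -> inX n y -> inX n (vsub x y).
Proof. rewrite vsub_lc. apply inX_lc. Qed.

Lemma ip_sub_r n u x y : ip n u (vsub x y) = ip n u x - ip n u y.
Proof.
  unfold ip. rewrite (rsum_ext n _ (fun i => u i * x i + (-1) * (u i * y i)))
    by (intros; unfold vsub; ring).
  rewrite rsum_plus, rsum_scal. ring.
Qed.

Lemma ip_zero_r n u : ip n u zerov = 0.
Proof.
  unfold ip. rewrite (rsum_ext n _ (fun i => 0 * u i)) by (intros; unfold zerov; ring).
  rewrite rsum_scal. ring.
Qed.

Lemma mapply_lc n M a x b y i : (i < n)%nat ->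
  mapply n M (vlc a x b y) i = a * mapply n M x i + b * mapply n M y i.
Proof.
  intros H. unfold mapply. rewrite (proj2 (Nat.ltb_lt i n) H).
  unfold vlc. rewrite <- !rsum_scal, <- rsum_plus. apply rsum_ext; intros; ring.
Qed.

Lemma Bf_lc_l n M a x b y u : Bf n M (vlc a x b y) u = a * Bf n M x u + b * Bf n M y u.
Proof. unfold Bf, ip, vlc. rewrite <- !rsum_scal, <- rsum_plus. apply rsum_ext; intros; ring. Qed.

Lemma Bf_lc_r n M a x b y u : Bf n M u (vlc a x b y) = a * Bf n M u x + b * Bf n M u y.
Proof.
  unfold Bf, ip. rewrite <- !rsum_scal, <- rsum_plus.
  apply rsum_ext; intros. rewrite mapply_lc by assumption. ring.
Qed.

Lemma Bf_expand n M x y :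
  Bf n M x y = rsum n (fun i => rsum n (fun j => x i * M i j * y j)).
Proof.
  unfold Bf, ip, mapply. apply rsum_ext; intros i Hi.
  rewrite (proj2 (Nat.ltb_lt i n) Hi), <- rsum_scal. apply rsum_ext; intros; ring.
Qed.

Lemma Bf_sym n M x y : self_adjoint n M -> Bf n M x y = Bf n M y x.
Proof.
  intros H. rewrite !Bf_expand, rsum_swap.
  apply rsum_ext; intros i Hi. apply rsum_ext; intros j Hj. rewrite (H j i) by assumption. ring.
Qed.

Lemma Qf_lc n M a x b y : self_adjoint n M ->
  Qf n M (vlc a x b y) = a * a * Qf n M x + 2 * a * b * Bf n M x y + b * b * Qf n M y.
Proof. intros H. unfold Qf. rewrite Bf_lc_l, !Bf_lc_r, (Bf_sym n M y x H). ring. Qed.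

Lemma nonneg_quadratic_discr a B c :
  0 <= c -> (forall t, 0 <= a - 2 * t * B + t * t * c) -> B * B <= a * c.
Proof.
  intros Hc Hq. destruct (Req_dec c 0) as [E|E].
  - subst c. destruct (Req_dec B 0) as [->|HB]; [nra|].
    specialize (Hq ((a + 1) / (2 * B))).
    replace (2 * ((a + 1) / (2 * B)) * B) with (a + 1) in Hq by (field; exact HB). nra.
  - specialize (Hq (B / c)).
    replace (a - 2 * (B / c) * B + B / c * (B / c) * c) with ((a * c - B * B) / c) in Hq
      by (field; exact E).
    assert (0 <= (a * c - B * B) / c * c) by (apply Rmult_le_pos; lra).
    replace ((a * c - B * B) / c * c) with (a * c - B * B) in H by (field; exact E). lra.
Qed.

Definition psd (n : nat) (M : mat) : Prop :=
  self_adjoint n M /\ forall x, inX n x -> 0 <= Qf n M x.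

Lemma Cauchy_Schwarz n M x y : psd n M -> inX n x -> inX n y ->
  Bf n M x y * Bf n M x y <= Qf n M x * Qf n M y.
Proof.
  intros [Hs Hp] Hx Hy. apply nonneg_quadratic_discr; [apply Hp; exact Hy|].
  intros t. assert (H := Hp (vlc 1 x (- t) y) (inX_lc _ _ _ _ _ Hx Hy)).
  rewrite Qf_lc in H by exact Hs. nra.
Qed.

Lemma normM_nonneg n M x : 0 <= normM n M x.
Proof. apply sqrt_pos. Qed.

Lemma normM_sq n M x : psd n M -> inX n x -> normM n M x * normM n M x = Qf n M x.
Proof. intros [_ Hp] Hx. apply sqrt_sqrt, Hp, Hx. Qed.

Lemma Bf_le_normM n M x y : psd n M -> inX n x -> inX n y ->
  Bf n M x y <= normM n M x * normM n M y.
Proof.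
  intros Hp Hx Hy. assert (HCS := Cauchy_Schwarz n M x y Hp Hx Hy).
  rewrite <- (normM_sq n M x), <- (normM_sq n M y) in HCS by assumption.
  assert (0 <= normM n M x * normM n M y) by (apply Rmult_le_pos; apply normM_nonneg).
  nra.
Qed.

Lemma normM_triangle n M x y : psd n M -> inX n x -> inX n y ->
  normM n M (vlc 1 x 1 y) <= normM n M x + normM n M y.
Proof.
  intros Hp Hx Hy. assert (HB := Bf_le_normM n M x y Hp Hx Hy).
  assert (Hsq := normM_sq n M _ Hp (inX_lc n 1 x 1 y Hx Hy)).
  rewrite Qf_lc, <- (normM_sq n M x), <- (normM_sq n M y) in Hsq by (apply Hp || assumption).
  assert (Hx0 := normM_nonneg n M x). assert (Hy0 := normM_nonneg n M y).
  assert (H0 := normM_nonneg n M (vlc 1 x 1 y)). nra.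
Qed.

Lemma normM_sub_triangle n M x y u : psd n M -> inX n x -> inX n y -> inX n u ->
  normM n M (vsub x u) <= normM n M (vsub x y) + normM n M (vsub y u).
Proof.
  intros Hp Hx Hy Hu.
  replace (vsub x u) with (vlc 1 (vsub x y) 1 (vsub y u))
    by (apply functional_extensionality; intros i; unfold vsub, vlc; ring).
  apply normM_triangle; [exact Hp | apply inX_sub; assumption ..].
Qed.

Lemma Qf_mscale n a M x : Qf n (mscale a M) x = a * Qf n M x.
Proof.
  unfold Qf. rewrite !Bf_expand, <- rsum_scal. apply rsum_ext; intros i _.
  rewrite <- rsum_scal. apply rsum_ext; intros j _. unfold mscale. ring.
Qed.

Lemma Qf_id n x : Qf n idmat x = ip n x x.
Proof.
  unfold Qf, Bf, ip, mapply. apply rsum_ext; intros i Hi.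
  rewrite (proj2 (Nat.ltb_lt i n) Hi). unfold idmat. rewrite rsum_delta by exact Hi. reflexivity.
Qed.

Lemma ip_self_nonneg n x : 0 <= ip n x x.
Proof. apply rsum_nonneg; intros; nra. Qed.

Lemma psd_id n : psd n idmat.
Proof.
  split.
  - intros i j _ _. unfold idmat. rewrite Nat.eqb_sym. reflexivity.
  - intros x _. rewrite Qf_id. apply ip_self_nonneg.
Qed.

Lemma enorm_normM n x : enorm n x = normM n idmat x.
Proof. unfold enorm, normM. fold (Bf n idmat x x) (Qf n idmat x). rewrite Qf_id. reflexivity. Qed.

Lemma coord_le_enorm n x i : (i < n)%nat -> Rabs (x i) <= enorm n x.
Proof.
  intros H. unfold enorm. rewrite <- sqrt_Rsqr_abs. apply sqrt_le_1_alt.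
  apply (rsum_term_le n (fun j => x j * x j)); [intros; unfold Rsqr; nra | exact H].
Qed.

Lemma rsum_sum_f_R0 m u : rsum (S m) u = sum_f_R0 u m.
Proof. induction m as [|m IH]; simpl in *; [ring | rewrite <- IH; reflexivity]. Qed.

Lemma partial_sum_le u s : (forall k, 0 <= u k) -> infinite_sum u s -> forall k, rsum k u <= s.
Proof.
  intros H Hs k. apply Rnot_lt_le; intros Hlt.
  destruct (Hs (rsum k u - s) ltac:(lra)) as [N HN].
  specialize (HN (k + N)%nat ltac:(lia)). rewrite <- rsum_sum_f_R0 in HN. unfold Rdist in HN.
  assert (rsum k u <= rsum (S (k + N)) u) by (apply rsum_mono; [exact H | lia]).
  apply Rabs_def2 in HN. lra.
Qed.

Lemma series_terms_to_zero u s : infinite_sum u s -> is_lim_seq u 0.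
Proof. intros Hs. apply ex_series_lim_0. exists s. apply is_series_Reals, Hs. Qed.

Lemma quasi_decreasing_cv x d lb D :
  (forall k, lb <= x k) -> (forall k, 0 <= d k) -> (forall k, rsum k d <= D) ->
  (forall k, x (S k) <= x k + d k) -> exists l : R, is_lim_seq x l.
Proof.
  intros Hlb Hd HD Hx.
  destruct (ex_finite_lim_seq_decr (fun k => x k - rsum k d) (lb - D)) as [l1 Hl1].
  { intros k. simpl. specialize (Hx k). lra. }
  { intros k. specialize (Hlb k). specialize (HD k). lra. }
  destruct (ex_finite_lim_seq_incr (fun k => rsum k d) D) as [l2 Hl2]; [|exact HD|].
  { intros k. simpl. specialize (Hd k). lra. }
  exists (l1 + l2). apply (is_lim_seq_ext (fun k => (x k - rsum k d) + rsum k d)); [intros; ring|].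
  apply is_lim_seq_plus'; assumption.
Qed.

Lemma exp_ge_1_plus x : 0 <= x -> 1 + x <= exp x.
Proof.
  intros H. destruct (Req_dec x 0) as [->|Hne]; [rewrite exp_0; lra|].
  left. apply exp_ineq1. lra.
Qed.

Lemma exp_monotone x y : x <= y -> exp x <= exp y.
Proof. intros [H|H]; [left; apply exp_increasing, H | right; rewrite H; reflexivity]. Qed.

Section QuasiFejer.
Variables (a nu eps : nat -> R) (Snu Seps : R).
Hypothesis Ha : forall k, 0 <= a k.
Hypothesis Hnu : forall k, 0 <= nu k.
Hypothesis Heps : forall k, 0 <= eps k.
Hypothesis HSnu : forall k, rsum k nu <= Snu.
Hypothesis HSeps : forall k, rsum k eps <= Seps.
Hypothesis Hrec : forall k, a (S k) <= (1 + nu k) * (a k + eps k).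

(** Unrolling the recursion: [prod (1 + nu_j) <= exp (sum nu_j)]. *)
Lemma quasi_fejer_unrolled k : a k <= exp (rsum k nu) * (a O + rsum k eps).
Proof.
  induction k as [|k IH]; simpl; [rewrite exp_0; lra|].
  rewrite exp_plus. assert (E1 := exp_ge_1_plus (nu k) (Hnu k)).
  assert (E2 : 1 <= exp (rsum k nu)) by (rewrite <- exp_0; apply exp_monotone, rsum_nonneg; auto).
  assert (0 <= rsum k eps) by (apply rsum_nonneg; auto).
  set (E := exp (rsum k nu)) in *. set (B := a O + rsum k eps) in *.
  specialize (Hrec k). specialize (Heps k). specialize (Ha O). specialize (Hnu k).
  assert (Hstep : a k + eps k <= E * (B + eps k)) by nra.
  assert (0 <= E * (B + eps k)) by (unfold B in *; nra).
  apply Rle_trans with ((1 + nu k) * (E * (B + eps k))); [nra|].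
  replace (E * exp (nu k) * (a O + (rsum k eps + eps k))) with (exp (nu k) * (E * (B + eps k)))
    by (unfold B; ring).
  apply Rmult_le_compat_r; lra.
Qed.

Definition fejer_bound : R := exp Snu * (a O + Seps).

Lemma quasi_fejer_bounded k : a k <= fejer_bound.
Proof.
  eapply Rle_trans; [apply quasi_fejer_unrolled|]. unfold fejer_bound.
  assert (0 <= rsum k eps) by (apply rsum_nonneg; auto). specialize (Ha O).
  apply Rmult_le_compat; [left; apply exp_pos | lra | apply exp_monotone, HSnu |].
  specialize (HSeps k). lra.
Qed.

Lemma quasi_fejer_cv : exists l : R, is_lim_seq a l.
Proof.
  set (A := fejer_bound).
  assert (HA0 : 0 <= A) by (apply Rle_trans with (a O); [apply Ha | apply quasi_fejer_bounded]).
  assert (HSnu0 : 0 <= Snu) by (apply (Rle_trans _ (rsum O nu)); [simpl; lra | apply HSnu]).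
  apply (quasi_decreasing_cv a (fun k => A * nu k + (1 + Snu) * eps k) 0
           (A * Snu + (1 + Snu) * Seps)); [exact Ha | | |].
  - intros k. specialize (Hnu k). specialize (Heps k). nra.
  - intros k. rewrite rsum_plus, !rsum_scal.
    specialize (HSnu k). specialize (HSeps k).
    assert (0 <= rsum k eps) by (apply rsum_nonneg; auto). nra.
  - intros k. assert (nu k <= Snu).
    { apply Rle_trans with (rsum (S k) nu); [|apply HSnu].
      simpl. assert (0 <= rsum k nu) by (apply rsum_nonneg; auto). lra. }
    assert (a k <= A) by apply quasi_fejer_bounded.
    specialize (Hrec k). specialize (Hnu k). specialize (Heps k). specialize (Ha k). nra.
Qed.

End QuasiFejer.

Lemma is_lim_seq_sqr_0 r : (forall k, 0 <= r k) ->
  is_lim_seq (fun k => r k * r k) 0 -> is_lim_seq r 0.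
Proof.
  intros Hr H. rewrite <- sqrt_0.
  apply (is_lim_seq_ext (fun k => sqrt (r k * r k))); [intros k; apply sqrt_square, Hr|].
  apply is_lim_seq_continuous; [apply continuity_pt_sqrt; lra | exact H].
Qed.

Lemma is_lim_seq_rsum m (u : nat -> nat -> R) (l : nat -> R) :
  (forall i, (i < m)%nat -> is_lim_seq (fun k => u k i) (l i)) ->
  is_lim_seq (fun k => rsum m (u k)) (rsum m l).
Proof.
  induction m as [|m IH]; intros H; simpl; [apply is_lim_seq_const|].
  apply is_lim_seq_plus'; [apply IH; intros; apply H; lia | apply H; lia].
Qed.

Lemma Qf_cv_0 n A (v : nat -> vec) :
  (forall i, (i < n)%nat -> is_lim_seq (fun k => v k i) 0) ->
  is_lim_seq (fun k => Qf n A (v k)) 0.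
Proof.
  intros Hv. unfold Qf. apply (is_lim_seq_ext (fun k => rsum n (fun i => rsum n (fun j =>
    v k i * A i j * v k j)))); [intros; symmetry; apply Bf_expand|].
  assert (Hlim0 : rsum n (fun i => rsum n (fun j => 0 * A i j * 0)) = 0).
  { transitivity (rsum n (fun _ => 0 * 0)); [|rewrite rsum_scal; ring].
    apply rsum_ext; intros i _. transitivity (0 * rsum n (fun j => A i j * 0)); [|ring].
    rewrite <- rsum_scal. apply rsum_ext; intros; ring. }
  rewrite <- Hlim0.
  apply is_lim_seq_rsum; intros i Hi. apply is_lim_seq_rsum; intros j Hj.
  apply is_lim_seq_mult'; [apply is_lim_seq_mult'; [apply Hv, Hi | apply is_lim_seq_const] | apply Hv, Hj].
Qed.

Definition subseq (phi : nat -> nat) : Prop := forall k, (phi k < phi (S k))%nat.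

Lemma subseq_comp phi psi : subseq phi -> subseq psi -> subseq (fun k => phi (psi k)).
Proof.
  intros Hphi Hpsi k. specialize (Hpsi k).
  induction Hpsi as [|m _ IH]; [apply Hphi | specialize (Hphi m); lia].
Qed.

Lemma is_lim_seq_subseq_strict u (l : R) phi :
  subseq phi -> is_lim_seq u l -> is_lim_seq (fun k => u (phi k)) l.
Proof. intros H. apply is_lim_seq_subseq, eventually_subseq, H. Qed.

Lemma is_lim_seq_inv_S : is_lim_seq (fun k => / (INR k + 1)) 0.
Proof.
  apply (is_lim_seq_ext (fun k => / INR (S k))); [intros k; rewrite S_INR; reflexivity|].
  replace (Finite 0) with (Rbar_inv p_infty) by reflexivity.
  apply (is_lim_seq_inv (fun k => INR (S k))); [|discriminate].
  apply (is_lim_seq_incr_1 INR), is_lim_seq_INR.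
Qed.

Lemma cluster_value_subseq (u : nat -> R) (l : R) :
  (forall N e, 0 < e -> exists p, (N <= p)%nat /\ Rabs (u p - l) < e) ->
  exists phi, subseq phi /\ is_lim_seq (fun k => u (phi k)) l.
Proof.
  intros Hcl.
  assert (G : forall N k, exists p, (N <= p)%nat /\ Rabs (u p - l) < / (INR k + 1)).
  { intros N k. apply Hcl, Rinv_0_lt_compat. assert (0 <= INR k) by apply pos_INR. lra. }
  set (g N k := proj1_sig (constructive_indefinite_description _ (G N k))).
  assert (Hg : forall N k, (N <= g N k)%nat /\ Rabs (u (g N k) - l) < / (INR k + 1))
    by (intros N k; exact (proj2_sig (constructive_indefinite_description _ (G N k)))).
  set (phi := fix phi k := match k with O => g O O | S k' => g (S (phi k')) (S k') end).
  assert (Hphi : forall k, Rabs (u (phi k) - l) < / (INR k + 1)) by (intros [|k]; apply Hg).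
  exists phi. split.
  - intros k. simpl. destruct (Hg (S (phi k)) (S k)). lia.
  - apply (is_lim_seq_le_le (fun k => l - / (INR k + 1)) _ (fun k => l + / (INR k + 1))).
    + intros k. specialize (Hphi k). apply Rabs_def2 in Hphi. lra.
    + replace (Finite l) with (Finite (l - 0)) by (f_equal; ring).
      apply is_lim_seq_minus'; [apply is_lim_seq_const | apply is_lim_seq_inv_S].
    + replace (Finite l) with (Finite (l + 0)) by (f_equal; ring).
      apply is_lim_seq_plus'; [apply is_lim_seq_const | apply is_lim_seq_inv_S].
Qed.

Lemma Bolzano_Weierstrass_R (u : nat -> R) B : (forall k, Rabs (u k) <= B) ->
  exists phi (l : R), subseq phi /\ is_lim_seq (fun k => u (phi k)) l.
Proof.
  intros HB. destruct (Bolzano_Weierstrass u (fun x => -B <= x <= B) (compact_P3 (-B) B)) as [l Hl].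
  { intros k. specialize (HB k). apply Rabs_le_between in HB. exact HB. }
  destruct (cluster_value_subseq u l) as [phi Hphi]; [|exists phi, l; exact Hphi].
  intros N e He. destruct (Hl (disc l (mkposreal e He)) N) as [p Hp]; [|exists p; exact Hp].
  exists (mkposreal e He). intros y Hy. exact Hy.
Qed.

Lemma Bolzano_Weierstrass_vec (v : nat -> vec) B m : (forall k i, Rabs (v k i) <= B) ->
  exists phi (l : vec), subseq phi /\
    forall i, (i < m)%nat -> is_lim_seq (fun k => v (phi k) i) (l i).
Proof.
  intros HB. induction m as [|m [phi [l [Hphi Hl]]]].
  - exists (fun k => k), zerov. split; [intros k; lia | intros; lia].
  - destruct (Bolzano_Weierstrass_R (fun k => v (phi k) m) B) as [psi [lm [Hpsi Hlm]]];
      [intros; apply HB|].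
    exists (fun k => phi (psi k)), (fun i => if Nat.eqb i m then lm else l i).
    split; [apply subseq_comp; assumption|].
    intros i Hi. destruct (Nat.eqb_spec i m) as [->|Hne]; [exact Hlm|].
    apply (is_lim_seq_subseq_strict (fun k => v (phi k) i)); [exact Hpsi | apply Hl; lia].
Qed.

Lemma inf_exists (D : vec -> Prop) (f : vec -> R) : (forall x, 0 <= f x) -> (exists x, D x) ->
  exists d, (forall x, D x -> d <= f x) /\ (forall e, 0 < e -> exists x, D x /\ f x < d + e).
Proof.
  intros Hf [x0 Hx0].
  destruct (completeness (fun r => exists x, D x /\ r = - f x)) as [m [Hub Hlub]].
  { exists 0. intros r [x [_ ->]]. specialize (Hf x). lra. }
  { exists (- f x0). eauto. }
  exists (- m). split.
  - intros x Hx. assert (- f x <= m) by (apply Hub; eauto). lra.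
  - intros e He. apply NNPP; intros H.
    assert (m <= m - e); [|lra].
    apply Hlub. intros r [x [Hx ->]].
    destruct (Rlt_dec (f x) (- m + e)); [exfalso; apply H; eauto | lra].
Qed.

Lemma le_epsilon_scaled a b c : 0 < c -> (forall e, 0 < e -> a <= b + c * e) -> a <= b.
Proof.
  intros Hc H. apply Rnot_lt_le; intros Hlt.
  specialize (H ((a - b) / (2 * c)) ltac:(apply Rdiv_lt_0_compat; lra)).
  replace (c * ((a - b) / (2 * c))) with ((a - b) / 2) in H by (field; lra). lra.
Qed.

Lemma is_lim_seq_0_eventually u : is_lim_seq u 0 ->
  forall e, 0 < e -> exists N, forall k, (N <= k)%nat -> u k < e.
Proof.
  intros Hu e He. apply is_lim_seq_spec in Hu. destruct (Hu (mkposreal e He)) as [N HN].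
  exists N. intros k Hk. specialize (HN k Hk). simpl in HN. apply Rabs_def2 in HN. lra.
Qed.

Section VariableMetricProximalPoint.

Variables (n : nat) (T : vec -> vec -> Prop).
Variables (c : nat -> R) (c0 : R) (M : nat -> mat) (nu : nat -> R) (Snu lmin : R).
Variables (z w t : nat -> vec) (eps : nat -> R) (Seps : R).

Hypothesis HT : maximal_monotone n T.
Hypothesis Hc0 : 0 < c0.
Hypothesis Hc : forall k, c0 <= c k.
Hypothesis Hnu : forall k, 0 <= nu k.
Hypothesis Hnu_sum : infinite_sum nu Snu.
Hypothesis HMsa : forall k, self_adjoint n (M k).
Hypothesis HMdecr : forall k, loewner_le n (M (S k)) (mscale (1 + nu k) (M k)).
Hypothesis HMmin : forall k, loewner_le n (mscale lmin idmat) (M k).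
Hypothesis Hlmin : 0 < lmin.
Hypothesis HzX : forall k, inX n (z k).
Hypothesis Heps : forall k, 0 <= eps k.
Hypothesis Heps_sum : infinite_sum eps Seps.
(** [w k] is the exact proximal point [P_k (z k)], certified by [t k \in T (w k)],
    and [z (k+1)] approximates it up to [eps k] (criterion (A)). *)
Hypothesis Hgraph : forall k, T (w k) (t k).
Hypothesis Hresolvent : forall k i, (i < n)%nat ->
  mapply n (M k) (z k) i = mapply n (M k) (w k) i + c k * t k i.
Hypothesis Hinexact : forall k, normM n (M k) (vsub (z (S k)) (w k)) <= eps k.

Lemma nu_partial k : rsum k nu <= Snu.
Proof. exact (partial_sum_le nu Snu Hnu Hnu_sum k). Qed.

Lemma eps_partial k : rsum k eps <= Seps.
Proof. exact (partial_sum_le eps Seps Heps Heps_sum k). Qed.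

Lemma metric_lower k v : inX n v -> lmin * ip n v v <= Qf n (M k) v.
Proof. intros Hv. rewrite <- Qf_id, <- Qf_mscale. apply HMmin, Hv. Qed.

Lemma metric_psd k : psd n (M k).
Proof.
  split; [apply HMsa|]. intros v Hv.
  assert (H := metric_lower k v Hv). assert (H0 := ip_self_nonneg n v). nra.
Qed.

Lemma enorm_le_normM k v : inX n v -> enorm n v <= normM n (M k) v / sqrt lmin.
Proof.
  intros Hv. assert (Hs : 0 < sqrt lmin) by (apply sqrt_lt_R0, Hlmin).
  apply (Rmult_le_reg_l (sqrt lmin) _ _ Hs). field_simplify; [|lra].
  unfold enorm, normM. rewrite <- sqrt_mult_alt by lra. apply sqrt_le_1_alt, metric_lower, Hv.
Qed.

Lemma normM_step k v : inX n v -> normM n (M (S k)) v <= (1 + nu k) * normM n (M k) v.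
Proof.
  intros Hv. assert (H := HMdecr k v Hv). fold (Bf n (M (S k)) v v) (Qf n (M (S k)) v) in H.
  change (Qf n (M (S k)) v <= Qf n (mscale (1 + nu k) (M k)) v) in H.
  rewrite Qf_mscale in H. specialize (Hnu k).
  assert (Hk := normM_sq n (M k) v (metric_psd k) Hv).
  assert (HSk := normM_sq n (M (S k)) v (metric_psd (S k)) Hv).
  assert (H0 := normM_nonneg n (M k) v). assert (HS0 := normM_nonneg n (M (S k)) v).
  apply Rsqr_incr_0_var; [unfold Rsqr | nra].
  assert (0 <= nu k * Qf n (M k) v) by (rewrite <- Hk; nra). nra.
Qed.

Lemma metric_upper k v : inX n v -> Qf n (M k) v <= exp Snu * Qf n (M O) v.
Proof.
  intros Hv. assert (H0 := proj2 (metric_psd O) v Hv).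
  apply Rle_trans with (exp (rsum k nu) * Qf n (M O) v);
    [|apply Rmult_le_compat_r; [exact H0 | apply exp_monotone, nu_partial]].
  induction k as [|k IH]; simpl; [rewrite exp_0; lra|].
  assert (H := HMdecr k v Hv).
  change (Qf n (M (S k)) v <= Qf n (mscale (1 + nu k) (M k)) v) in H.
  rewrite Qf_mscale in H. rewrite exp_plus.
  assert (E := exp_ge_1_plus (nu k) (Hnu k)). assert (0 <= Qf n (M k) v) by apply metric_psd, Hv.
  assert (0 <= exp (rsum k nu) * Qf n (M O) v) by (apply Rmult_le_pos; [left; apply exp_pos | exact H0]).
  apply Rle_trans with ((1 + nu k) * (exp (rsum k nu) * Qf n (M O) v)).
  { eapply Rle_trans; [exact H | apply Rmult_le_compat_l; [specialize (Hnu k); lra | exact IH]]. }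
  replace (exp (rsum k nu) * exp (nu k) * Qf n (M O) v)
    with (exp (nu k) * (exp (rsum k nu) * Qf n (M O) v)) by ring.
  apply Rmult_le_compat_r; lra.
Qed.

Lemma prox_inX k : inX n (w k).
Proof. apply (proj1 HT _ _ (Hgraph k)). Qed.

Lemma zero_inX x : T x zerov -> inX n x.
Proof. intros Hx. apply (proj1 HT _ _ Hx). Qed.

Lemma prox_pairing k u : Bf n (M k) u (vsub (z k) (w k)) = c k * ip n u (t k).
Proof.
  unfold Bf, ip. rewrite <- rsum_scal. apply rsum_ext; intros i Hi.
  rewrite vsub_lc, mapply_lc, Hresolvent by exact Hi. ring.
Qed.

Lemma prox_firmly_nonexpansive k x : T x zerov ->
  Qf n (M k) (vsub (w k) x) + Qf n (M k) (vsub (z k) (w k)) <= Qf n (M k) (vsub (z k) x).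
Proof.
  intros Hx.
  replace (vsub (z k) x) with (vlc 1 (vsub (z k) (w k)) 1 (vsub (w k) x))
    by (apply functional_extensionality; intros i; unfold vsub, vlc; ring).
  rewrite Qf_lc, (Bf_sym _ _ _ _ (HMsa k)), prox_pairing by apply HMsa.
  assert (Hmon := proj1 (proj2 HT) _ _ _ _ (Hgraph k) Hx).
  rewrite ip_sub_r, ip_zero_r, Rminus_0_r in Hmon.
  specialize (Hc k). assert (0 <= c k * ip n (vsub (w k) x) (t k)) by nra. lra.
Qed.

Lemma prox_nonexpansive k x : T x zerov ->
  normM n (M k) (vsub (w k) x) <= normM n (M k) (vsub (z k) x).
Proof.
  intros Hx.
  change (sqrt (Qf n (M k) (vsub (w k) x)) <= sqrt (Qf n (M k) (vsub (z k) x))).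
  apply sqrt_le_1_alt. assert (H := prox_firmly_nonexpansive k x Hx).
  assert (0 <= Qf n (M k) (vsub (z k) (w k)))
    by (apply metric_psd, inX_sub; [apply HzX | apply prox_inX]). lra.
Qed.

Lemma fejer_step k x : T x zerov ->
  normM n (M (S k)) (vsub (z (S k)) x) <= (1 + nu k) * (normM n (M k) (vsub (z k) x) + eps k).
Proof.
  intros Hx. assert (HxX := zero_inX x Hx). assert (Hnuk := Hnu k).
  eapply Rle_trans; [apply normM_step, inX_sub; [apply HzX | exact HxX]|].
  apply Rmult_le_compat_l; [lra|].
  eapply Rle_trans; [apply (normM_sub_triangle n (M k) _ (w k)); auto using metric_psd, prox_inX|].
  assert (H := prox_nonexpansive k x Hx). specialize (Hinexact k). lra.
Qed.

Lemma fejer_distance x : T x zerov ->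
  (exists A, forall k, normM n (M k) (vsub (z k) x) <= A) /\
  (exists l : R, is_lim_seq (fun k => normM n (M k) (vsub (z k) x)) l).
Proof.
  intros Hx. set (a k := normM n (M k) (vsub (z k) x)).
  assert (Ha : forall k, 0 <= a k) by (intros; apply normM_nonneg).
  assert (Hrec : forall k, a (S k) <= (1 + nu k) * (a k + eps k)) by (intros; apply fejer_step, Hx).
  split.
  - exists (fejer_bound a Snu Seps).
    exact (quasi_fejer_bounded a nu eps Snu Seps Ha Hnu Heps nu_partial eps_partial Hrec).
  - exact (quasi_fejer_cv a nu eps Snu Seps Ha Hnu Heps nu_partial eps_partial Hrec).
Qed.

Lemma iterates_bounded x0 : T x0 zerov -> exists B, forall k, enorm n (z k) <= B.
Proof.
  intros Hx0. assert (Hx0X := zero_inX x0 Hx0).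
  destruct (proj1 (fejer_distance x0 Hx0)) as [A HA].
  exists (A / sqrt lmin + enorm n x0). intros k.
  replace (z k) with (vlc 1 (vsub (z k) x0) 1 x0) at 1
    by (apply functional_extensionality; intros i; unfold vsub, vlc; ring).
  rewrite !enorm_normM.
  eapply Rle_trans; [apply normM_triangle; [apply psd_id | apply inX_sub; auto | exact Hx0X]|].
  rewrite <- !enorm_normM. apply Rplus_le_compat_r.
  eapply Rle_trans; [apply enorm_le_normM with (k := k), inX_sub; auto|].
  apply Rmult_le_compat_r; [left; apply Rinv_0_lt_compat, sqrt_lt_R0, Hlmin | apply HA].
Qed.

Lemma distance_recursion (d : nat -> R) :
  (forall k, is_distM n (M k) (z k) (fun x => T x zerov) (d k)) ->
  forall k, d (S k) <= (1 + nu k) * d k + (1 + nu k) * eps k.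
Proof.
  intros Hd k. assert (Hnuk := Hnu k).
  apply (le_epsilon_scaled _ _ (1 + nu k)); [lra|]. intros e He.
  destruct (proj2 (Hd k) e He) as [x [Hx Hxe]].
  apply Rle_trans with (normM n (M (S k)) (vsub (z (S k)) x)); [apply (proj1 (Hd (S k))), Hx|].
  eapply Rle_trans; [apply fejer_step, Hx|].
  apply Rle_trans with ((1 + nu k) * (d k + e + eps k)); [apply Rmult_le_compat_l; lra | right; ring].
Qed.

Lemma residual_vanishes x0 : T x0 zerov ->
  is_lim_seq (fun k => normM n (M k) (vsub (z k) (w k))) 0.
Proof.
  intros Hx0. assert (Hx0X := zero_inX x0 Hx0).
  destruct (proj2 (fejer_distance x0 Hx0)) as [L HL].
  set (a k := normM n (M k) (vsub (z k) x0)) in HL.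
  set (b k := normM n (M k) (vsub (w k) x0)).
  set (r k := normM n (M k) (vsub (z k) (w k))).
  assert (Hpyth : forall k, r k * r k + b k * b k <= a k * a k).
  { intros k. unfold a, b, r.
    rewrite !normM_sq by (apply metric_psd || apply inX_sub; auto using prox_inX).
    rewrite Rplus_comm. apply prox_firmly_nonexpansive, Hx0. }
  assert (Hba : forall k, b k <= a k) by (intros; apply prox_nonexpansive, Hx0).
  assert (Hab : forall k, a (S k) / (1 + nu k) - eps k <= b k).
  { intros k. assert (Hnuk := Hnu k).
    assert (H : a (S k) <= (1 + nu k) * (normM n (M k) (vsub (z (S k)) (w k)) + b k)).
    { eapply Rle_trans; [apply normM_step, inX_sub; auto|].
      apply Rmult_le_compat_l; [lra | apply normM_sub_triangle; auto using metric_psd, prox_inX]. }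
    assert (Hinex := Hinexact k).
    apply (Rmult_le_reg_l (1 + nu k)); [lra|]. field_simplify; [|lra]. nra. }
  assert (Hb : is_lim_seq b L).
  { apply (is_lim_seq_le_le (fun k => a (S k) / (1 + nu k) - eps k) _ a);
      [intros k; split; [apply Hab | apply Hba] | | exact HL].
    replace (Finite L) with (Finite (L / (1 + 0) - 0)) by (f_equal; field).
    apply is_lim_seq_minus'; [|exact (series_terms_to_zero eps Seps Heps_sum)].
    apply is_lim_seq_div'; [exact (proj1 (is_lim_seq_incr_1 a L) HL) | | lra].
    apply is_lim_seq_plus'; [apply is_lim_seq_const | exact (series_terms_to_zero nu Snu Hnu_sum)]. }
  apply is_lim_seq_sqr_0; [intros; apply normM_nonneg|].
  apply (is_lim_seq_le_le (fun _ => 0) _ (fun k => a k * a k - b k * b k)).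
  - intros k. specialize (Hpyth k). assert (0 <= b k) by apply normM_nonneg.
    split; [apply Rle_0_sqr | lra].
  - apply is_lim_seq_const.
  - replace (Finite 0) with (Finite (L * L - L * L)) by (f_equal; ring).
    apply is_lim_seq_minus'; apply is_lim_seq_mult'; assumption.
Qed.

Lemma prox_coord_close k i : (i < n)%nat ->
  Rabs (z k i - w k i) <= normM n (M k) (vsub (z k) (w k)) / sqrt lmin.
Proof.
  intros Hi. apply Rle_trans with (enorm n (vsub (z k) (w k))).
  - apply (coord_le_enorm n (vsub (z k) (w k))), Hi.
  - apply enorm_le_normM, inX_sub; [apply HzX | apply prox_inX].
Qed.

(** Monotonicity of [T] against the pair [(w k, t k)], with [t k] expressed
    through the residual [z k - w k]. *)
Lemma graph_pairing_bound k x' y' : T x' y' ->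
  ip n (vsub (w k) x') y' <=
  normM n (M k) (vsub (w k) x') * normM n (M k) (vsub (z k) (w k)) / c0.
Proof.
  intros Hxy. assert (Hx' := proj1 (proj1 HT _ _ Hxy)).
  assert (Hmon := proj1 (proj2 HT) _ _ _ _ (Hgraph k) Hxy).
  rewrite ip_sub_r in Hmon.
  assert (HCS := Bf_le_normM n (M k) (vsub (w k) x') (vsub (z k) (w k)) (metric_psd k)
                   (inX_sub _ _ _ (prox_inX k) Hx') (inX_sub _ _ _ (HzX k) (prox_inX k))).
  rewrite prox_pairing in HCS.
  set (P := normM n (M k) (vsub (w k) x') * normM n (M k) (vsub (z k) (w k))) in *.
  assert (HP : 0 <= P) by (apply Rmult_le_pos; apply normM_nonneg).
  assert (Hck := Hc k). set (q := ip n (vsub (w k) x') (t k)) in *.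
  assert (q <= P / c0); [|lra].
  destruct (Rle_dec q 0) as [Hq|Hq]; [assert (0 <= P / c0) by (apply Rdiv_le_0_compat; lra); lra|].
  apply (Rmult_le_reg_l c0 _ _ Hc0). field_simplify; [|lra]. nra.
Qed.

Lemma prox_subseq_cv x0 phi (zinf : vec) :
  T x0 zerov -> subseq phi ->
  (forall i, (i < n)%nat -> is_lim_seq (fun k => z (phi k) i) (zinf i)) ->
  forall i, (i < n)%nat -> is_lim_seq (fun k => w (phi k) i) (zinf i).
Proof.
  intros Hx0 Hphi Hzcv i Hi. assert (Hs : 0 < sqrt lmin) by (apply sqrt_lt_R0, Hlmin).
  set (r k := normM n (M k) (vsub (z k) (w k))).
  assert (Hr : is_lim_seq (fun k => r (phi k)) 0)
    by (apply (is_lim_seq_subseq_strict r 0 phi Hphi), (residual_vanishes x0 Hx0)).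
  assert (Hdiff : is_lim_seq (fun k => z (phi k) i - w (phi k) i) 0).
  { apply is_lim_seq_abs_0.
    apply (is_lim_seq_le_le (fun _ => 0) _ (fun k => r (phi k) / sqrt lmin));
      [intros k; split; [apply Rabs_pos | apply prox_coord_close, Hi] | apply is_lim_seq_const|].
    replace (Finite 0) with (Finite (0 / sqrt lmin)) by (f_equal; field; lra).
    apply is_lim_seq_div'; [exact Hr | apply is_lim_seq_const | lra]. }
  replace (Finite (zinf i)) with (Finite (zinf i - 0)) by (f_equal; ring).
  apply (is_lim_seq_ext (fun k => z (phi k) i - (z (phi k) i - w (phi k) i))); [intros; ring|].
  apply is_lim_seq_minus'; [apply Hzcv, Hi | exact Hdiff].
Qed.

Lemma prox_distance_bounded x0 x' : T x0 zerov -> inX n x' ->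
  exists W, forall k, normM n (M k) (vsub (w k) x') <= W.
Proof.
  intros Hx0 Hx'. assert (Hx0X := zero_inX x0 Hx0).
  destruct (proj1 (fejer_distance x0 Hx0)) as [A HA].
  exists (A + sqrt (exp Snu * Qf n (M O) (vsub x0 x'))). intros k.
  eapply Rle_trans; [apply (normM_sub_triangle n (M k) _ x0); auto using metric_psd, prox_inX|].
  apply Rplus_le_compat; [eapply Rle_trans; [apply prox_nonexpansive, Hx0 | apply HA]|].
  apply sqrt_le_1_alt, metric_upper, inX_sub; assumption.
Qed.

(** Every cluster point of the iterates is a zero of [T]: it passes the
    maximality test of [T] in the limit of [graph_pairing_bound]. *)
Lemma cluster_point_is_zero x0 phi (zinf : vec) :
  T x0 zerov -> subseq phi -> inX n zinf ->
  (forall i, (i < n)%nat -> is_lim_seq (fun k => z (phi k) i) (zinf i)) ->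
  T zinf zerov.
Proof.
  intros Hx0 Hphi HzinfX Hzcv.
  assert (Hwcv := prox_subseq_cv x0 phi zinf Hx0 Hphi Hzcv).
  set (r k := normM n (M k) (vsub (z k) (w k))).
  assert (Hr : is_lim_seq (fun k => r (phi k)) 0)
    by (apply (is_lim_seq_subseq_strict r 0 phi Hphi), (residual_vanishes x0 Hx0)).
  apply (proj2 (proj2 HT)); [exact HzinfX | intros i _; reflexivity|].
  intros x' y' Hxy. destruct (prox_distance_bounded x0 x' Hx0 (proj1 (proj1 HT _ _ Hxy))) as [W HW].
  assert (Hlim : Rbar_le (ip n (vsub zinf x') y') (W * 0 / c0)).
  { apply (is_lim_seq_le (fun k => ip n (vsub (w (phi k)) x') y') (fun k => W * r (phi k) / c0)).
    - intros k. eapply Rle_trans; [apply graph_pairing_bound, Hxy|].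
      unfold Rdiv. apply Rmult_le_compat_r; [left; apply Rinv_0_lt_compat, Hc0|].
      apply Rmult_le_compat_r; [apply normM_nonneg | apply HW].
    - apply is_lim_seq_rsum; intros i Hi. unfold vsub.
      apply is_lim_seq_mult'; [apply is_lim_seq_minus'; [apply Hwcv, Hi|]|]; apply is_lim_seq_const.
    - apply is_lim_seq_div'; [apply is_lim_seq_mult'; [apply is_lim_seq_const | exact Hr]
                             | apply is_lim_seq_const | lra]. }
  simpl in Hlim. replace (W * 0 / c0) with 0 in Hlim by (field; lra).
  rewrite ip_sub_r, ip_zero_r. lra.
Qed.

Lemma iterates_cluster_point x0 : T x0 zerov ->
  exists phi (zinf : vec), subseq phi /\ inX n zinf /\
    forall i, (i < n)%nat -> is_lim_seq (fun k => z (phi k) i) (zinf i).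
Proof.
  intros Hx0. destruct (iterates_bounded x0 Hx0) as [B HB].
  assert (Hcoord : forall k i, Rabs (z k i) <= B).
  { intros k i. destruct (Nat.lt_ge_cases i n) as [Hi|Hi].
    - eapply Rle_trans; [apply coord_le_enorm, Hi | apply HB].
    - rewrite (HzX k i Hi), Rabs_R0. eapply Rle_trans; [apply sqrt_pos | apply (HB O)]. }
  destruct (Bolzano_Weierstrass_vec z B n Hcoord) as [phi [l [Hphi Hl]]].
  exists phi, (fun i => if Nat.ltb i n then l i else 0). split; [exact Hphi|]. split.
  - intros i Hi. rewrite (proj2 (Nat.ltb_ge i n) Hi). reflexivity.
  - intros i Hi. rewrite (proj2 (Nat.ltb_lt i n) Hi). apply Hl, Hi.
Qed.

Lemma cluster_distance_vanishes phi (zinf : vec) : inX n zinf ->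
  (forall i, (i < n)%nat -> is_lim_seq (fun k => z (phi k) i) (zinf i)) ->
  is_lim_seq (fun k => normM n (M (phi k)) (vsub (z (phi k)) zinf)) 0.
Proof.
  intros HzinfX Hzcv. apply is_lim_seq_sqr_0; [intros; apply normM_nonneg|].
  apply (is_lim_seq_le_le (fun _ => 0) _ (fun k => exp Snu * Qf n (M O) (vsub (z (phi k)) zinf))).
  - intros k. assert (Hv := inX_sub _ _ _ (HzX (phi k)) HzinfX).
    rewrite normM_sq by (apply metric_psd || exact Hv).
    split; [apply metric_psd, Hv | apply metric_upper, Hv].
  - apply is_lim_seq_const.
  - replace (Finite 0) with (Finite (exp Snu * 0)) by (f_equal; ring).
    apply is_lim_seq_mult'; [apply is_lim_seq_const|]. apply Qf_cv_0; intros i Hi.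
    replace (Finite 0) with (Finite (zinf i - zinf i)) by (f_equal; ring).
    apply is_lim_seq_minus'; [apply Hzcv, Hi | apply is_lim_seq_const].
Qed.

(** The iterates converge to a zero of [T]: the [M_k]-distance to the cluster
    point converges (Fejer) and vanishes along a subsequence, hence tends to 0. *)
Lemma iterates_converge x0 : T x0 zerov ->
  exists zinf, inX n zinf /\ T zinf zerov /\
    is_lim_seq (fun k => enorm n (vsub (z k) zinf)) 0.
Proof.
  intros Hx0. destruct (iterates_cluster_point x0 Hx0) as [phi [zinf [Hphi [HzinfX Hzcv]]]].
  assert (Hzero := cluster_point_is_zero x0 phi zinf Hx0 Hphi HzinfX Hzcv).
  exists zinf. split; [exact HzinfX|]. split; [exact Hzero|].
  set (a k := normM n (M k) (vsub (z k) zinf)).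
  destruct (proj2 (fejer_distance zinf Hzero)) as [L HL]. fold a in HL.
  assert (HL0 : L = 0).
  { assert (Hsub0 : is_lim_seq (fun k => a (phi k)) 0)
      by exact (cluster_distance_vanishes phi zinf HzinfX Hzcv).
    assert (H := is_lim_seq_unique _ _ (is_lim_seq_subseq_strict a L phi Hphi HL)).
    rewrite (is_lim_seq_unique _ _ Hsub0) in H. injection H. auto. }
  rewrite HL0 in HL. assert (Hs : sqrt lmin <> 0) by apply Rgt_not_eq, sqrt_lt_R0, Hlmin.
  apply (is_lim_seq_le_le (fun _ => 0) _ (fun k => a k / sqrt lmin)).
  - intros k. split; [apply sqrt_pos | apply enorm_le_normM, inX_sub; auto].
  - apply is_lim_seq_const.
  - replace (Finite 0) with (Finite (0 / sqrt lmin)) by (f_equal; field; exact Hs).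
    apply is_lim_seq_div'; [exact HL | apply is_lim_seq_const | exact Hs].
Qed.

End VariableMetricProximalPoint.

Lemma choice_nat {A : Type} (P : nat -> A -> Prop) :
  (forall k, exists a, P k a) -> exists f : nat -> A, forall k, P k (f k).
Proof.
  intros H. exists (fun k => proj1_sig (constructive_indefinite_description _ (H k))).
  intros k. exact (proj2_sig (constructive_indefinite_description _ (H k))).
Qed.

Theorem mainTheorem3
  (n : nat) (T : vec -> vec -> Prop) (c : nat -> R) (M : nat -> mat)
  (nu : nat -> R) (lmin linf : R) (lmax : nat -> R)
  (z : nat -> vec) (eps : nat -> R)
  (HT : maximal_monotone n T)
  (Hc : exists c0, 0 < c0 /\ forall k, c0 <= c k)
  (Hnu : (forall k, 0 <= nu k) /\ exists s, infinite_sum nu s)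
  (HMsa : forall k, self_adjoint n (M k))
  (HMpd : forall k, pos_def n (M k))
  (HMdecr : forall k, loewner_le n (M (S k)) (mscale (1 + nu k) (M k)))
  (HMmin : forall k, loewner_le n (mscale lmin idmat) (M k))
  (Hlmax : forall k, is_lambda_max n (M k) (lmax k))
  (Hlinf : limsup_eq lmax linf)
  (Hlpos : 0 < lmin) (Hlle : lmin <= linf)
  (HOmega : exists x, T x zerov)
  (HzX : forall k, inX n (z k))
  (Heps : (forall k, 0 <= eps k) /\ exists s, infinite_sum eps s)
  (HA : forall k, exists w, is_prox n (M k) (c k) T (z k) w /\
                            normM n (M k) (vsub (z (S k)) w) <= eps k) :
  (exists B, forall k, enorm n (z k) <= B) /\
  (exists d : nat -> R,
     (forall k, is_distM n (M k) (z k) (fun x => T x zerov) (d k)) /\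
     (forall k, d (S k) <= (1 + nu k) * d k + (1 + nu k) * eps k)) /\
  (exists zinf, inX n zinf /\ T zinf zerov /\
     forall e, 0 < e -> exists N, forall k, (N <= k)%nat -> enorm n (vsub (z k) zinf) < e).
Proof.
  destruct Hc as [c0 [Hc0 Hc]], Hnu as [Hnu [Snu HSnu]], Heps as [Heps [Seps HSeps]].
  destruct HOmega as [x0 Hx0].
  (* the exact proximal points [w k] together with their certificates [t k] *)
  destruct (choice_nat (fun k (p : vec * vec) => T (fst p) (snd p) /\
              (forall i, (i < n)%nat -> mapply n (M k) (z k) i = mapply n (M k) (fst p) i + c k * snd p i) /\
              normM n (M k) (vsub (z (S k)) (fst p)) <= eps k)) as [wt Hwt].
  { intros k. destruct (HA k) as [w [[t [Ht Hres]] Hin]]. exists (w, t). auto. }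
  set (w k := fst (wt k)). set (t k := snd (wt k)).
  assert (Hgraph : forall k, T (w k) (t k)) by apply Hwt.
  assert (Hres : forall k i, (i < n)%nat ->
            mapply n (M k) (z k) i = mapply n (M k) (w k) i + c k * t k i) by apply Hwt.
  assert (Hinex : forall k, normM n (M k) (vsub (z (S k)) (w k)) <= eps k) by apply Hwt.
  split; [|split].
  - exact (iterates_bounded n T c c0 M nu Snu lmin z w t eps Seps HT Hc0 Hc Hnu HSnu HMsa
             HMdecr HMmin Hlpos HzX Heps HSeps Hgraph Hres Hinex x0 Hx0).
  - destruct (choice_nat (fun k d => is_distM n (M k) (z k) (fun x => T x zerov) d)) as [d Hd].
    { intros k. apply inf_exists; [intros; apply normM_nonneg | exists x0; exact Hx0]. }
    exists d. split; [exact Hd|].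
    exact (distance_recursion n T c c0 M nu lmin z w t eps HT Hc0 Hc Hnu HMsa HMdecr HMmin
             Hlpos HzX Hgraph Hres Hinex d Hd).
  - destruct (iterates_converge n T c c0 M nu Snu lmin z w t eps Seps HT Hc0 Hc Hnu HSnu HMsa
                HMdecr HMmin Hlpos HzX Heps HSeps Hgraph Hres Hinex x0 Hx0)
      as [zinf [HzinfX [Hzero Hcv]]].
    exists zinf. split; [exact HzinfX|]. split; [exact Hzero|].
    exact (is_lim_seq_0_eventually _ Hcv).
Qed.
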